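(* Let $\mathcal{H}$ be a complex linear space with a non-degenerate indefinite inner product $[\cdot,\cdot]$, and let $\mathcal{F}_{++}=\{f\in\mathcal{H}:[f,f]>0\}$. Let $W$ be a linear operator defined on $\mathcal{F}_{++}$ which maps $\mathcal{F}_{++}$ onto $\mathcal{F}_{++}$ in a one-to-one manner. Then the (unique) linear extension of $W$ to $\mathcal{H}$ is a bijection of $\mathcal{H}$ onto itself, and $$[Wf,Wg]=\theta[f,g]\quad\text{for all } f,g\in\mathcal{H},\qquad\text{where}\quad \theta=\inf_{f\in\mathcal{F}_{++}}\frac{[Wf,Wf]}{[f,f]}>0.$$
   Context: An indefinite inner product on a complex linear space $\mathcal{H}$ is a Hermitian sesquilinear form $[\cdot,\cdot]$ (linear in the second argument) for which there exist vectors $f,g$ with $[f,f]>0$ and $[g,g]<0$; it is non-degenerate if $[f,g]=0$ for all $g$ implies $f=0$. An operator $W:\mathcal{F}_{++}\to\mathcal{H}$ is linear (on $\mathcal{F}_{++}$) if $W(cf)=cWf$ for $f\in\mathcal{F}_{++}$, nonzero $c\in\mathbb{C}$, and $W(f+g)=Wf+Wg$ whenever $f,g,f+g\in\mathcal{F}_{++}$. Such a $W$ extends uniquely to a linear operator on all of $\mathcal{H}$ (every vector is a sum of two positive vectors). *)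

From HB Require Import structures.
From mathcomp Require Import all_boot all_order all_algebra.
From mathcomp Require Import complex.
From mathcomp Require Import boolp classical_sets reals.
Set Implicit Arguments. Unset Strict Implicit. Unset Printing Implicit Defensive.
Import Order.TTheory GRing.Theory Num.Theory.
Local Open Scope ring_scope.
Local Open Scope complex_scope.

Definition herm_sesq_form (R : rcfType) (H : lmodType R[i])
    (ip : H -> H -> R[i]) : Prop :=
  (forall (a : R[i]) (f g h : H), ip f (a *: g + h) = a * ip f g + ip f h) /\
  (forall f g : H, ip g f = (ip f g)^*).

Definition indef_form (R : rcfType) (H : lmodType R[i]) (ip : H -> H -> R[i]) : Prop :=
  (exists f : H, 0 < ip f f) /\ (exists g : H, ip g g < 0).

Definition nondeg_form (R : rcfType) (H : lmodType R[i]) (ip : H -> H -> R[i]) : Prop :=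
  forall f : H, (forall g : H, ip f g = 0) -> f = 0.

Definition Fpp (R : rcfType) (H : lmodType R[i]) (ip : H -> H -> R[i]) : set H :=
  [set f | 0 < ip f f].

Definition linear_on_Fpp (R : rcfType) (H : lmodType R[i]) (ip : H -> H -> R[i])
    (W : H -> H) : Prop :=
  (forall (c : R[i]) (f : H), Fpp ip f -> c != 0 -> W (c *: f) = c *: W f) /\
  (forall f g : H, Fpp ip f -> Fpp ip g -> Fpp ip (f + g) -> W (f + g) = W f + W g).

Definition lin_map (R : rcfType) (H : lmodType R[i]) (L : H -> H) : Prop :=
  forall (a : R[i]) (u v : H), L (a *: u + v) = a *: L u + L v.

(* theta = inf_{f in F_{++}} [Wf,Wf]/[f,f]  (the quotient is a positive real;
   we take its real part to view it in R) *)
Definition theta_W (R : realType) (H : lmodType R[i]) (ip : H -> H -> R[i])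
    (W : H -> H) : R :=
  inf [set complex.Re (ip (W f) (W f) / ip f f) | f in Fpp ip].

From HB Require Import structures.
From mathcomp Require Import all_boot all_order all_algebra.
From mathcomp Require Import complex.
From mathcomp Require Import boolp classical_sets reals.
From mathcomp Require Import ring lra.
Import Order.TTheory GRing.Theory Num.Theory.
Set Implicit Arguments. Unset Strict Implicit. Unset Printing Implicit Defensive.
Local Open Scope ring_scope.
Local Open Scope complex_scope.

(* Fix [p] with [[p,p] > 0]. As [[h + t p, h + t p]] is a quadratic in the real [t]
   with positive leading coefficient, [h + t p] is positive for all large [t], so [W]
   extends by [L h = W (h + t p) - W (t p)], independently of the large [t]; [L] is a
   linear bijection and [L f] is positive iff [f] is.  Such an [L] maps neutral vectors
   to neutral vectors: by nondegeneracy a neutral [f <> 0] has a positive [q] with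
   [Re [f,q] > 0], so [f + u q], hence [L f + u L q], is positive for all [u > 0].
   Let [c = [Lp,Lp] / [p,p]].  The defect [[Lf,Lf] - c [f,f]] vanishes at [p] and on
   neutral vectors.  If [[f,f] [g,g] < 0], the line [f + t g] crosses the neutral cone
   twice and the defect is affine in [t] along it, so it vanishes at [f] once it
   vanishes at [g].  Passing from [p] to a negative vector and back reaches every [f];
   polarization gives [[Lf,Lg] = c [f,g]], whence [theta = c]. *)

Lemma quadratic_eventually_gt0 (R : realFieldType) (a b c : R) : 0 < a ->
  exists T : R, 0 < T /\ forall t, T <= t -> 0 < c + b * t + a * t ^+ 2.
Proof.
move=> a_gt0; pose T := 1 + (`|b| + `|c|) / a.
have aT : a * T = a + `|b| + `|c|.
  by rewrite mulrDr mulr1 mulrCA divff ?mulr1 ?addrA // lt0r_neq0.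
have T_ge1 : 1 <= T by rewrite lerDl divr_ge0 ?addr_ge0 // ltW.
exists T; split=> [|t le_Tt]; first lra.
(* [a t^2 >= a T t = (a + |b| + |c|) t], which dominates [a t - b t - c] *)
have nb : - b <= `|b| by rewrite -normrN ler_norm.
have nc : - c <= `|c| by rewrite -normrN ler_norm.
have e1 : 0 <= a * t * (t - T) by rewrite mulr_ge0 ?subr_ge0 // mulr_ge0 //; lra.
have e2 : 0 <= (b + `|b|) * t by rewrite mulr_ge0 //; lra.
have e3 : 0 <= `|c| * (t - 1) by rewrite mulr_ge0 //; lra.
have e4 : 0 < a * t by rewrite mulr_gt0 //; lra.
have -> : a * t ^+ 2 = a * t * (t - T) + a * T * t by ring.
rewrite aT; nra.
Qed.

Lemma ge0_of_quadratic_gt0 (R : realFieldType) (a b c : R) :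
  (forall u, 0 < u -> 0 < a + b * u + c * u ^+ 2) -> 0 <= a.
Proof.
move=> pos; rewrite leNgt; apply/negP => a_lt0.
(* with [u = - a / (M - a)]: [a + b u + c u^2 <= a + M u = a u < 0] *)
set M := `|b| + `|c|.
have M_ge0 : 0 <= M by rewrite addr_ge0.
set u := - a / (M - a).
have u_gt0 : 0 < u by rewrite divr_gt0 ?oppr_gt0 //; lra.
have u_le1 : u <= 1 by rewrite ler_pdivrMr ?mul1r; lra.
have uE : (M - a) * u = - a by rewrite mulrC divfK // gt_eqF //; lra.
have bu : b * u <= `|b| * u by apply: ler_wpM2r; [exact: ltW | exact: ler_norm].
have cu : c * u ^+ 2 <= `|c| * u.
  apply: (@le_trans _ _ (`|c| * u ^+ 2)).
    by apply: ler_wpM2r; [rewrite exprn_ge0 // ltW | exact: ler_norm].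
  by rewrite ler_wpM2l // expr2 ger_pMl.
have := pos u u_gt0; rewrite /M in uE; nra.
Qed.

Lemma quadratic_two_roots (R : rcfType) (a b c : R) : a * c < 0 ->
  exists t1 t2 : R,
    [/\ t1 != t2, c + b * t1 + a * t1 ^+ 2 = 0 & c + b * t2 + a * t2 ^+ 2 = 0].
Proof.
move=> ac_lt0.
have a_neq0 : a != 0 by apply: contraTneq ac_lt0 => ->; rewrite mul0r ltxx.
have a2_neq0 : 2 * a != 0 by rewrite mulf_neq0 ?pnatr_eq0.
set s := Num.sqrt (b ^+ 2 - 4 * a * c).
have s_gt0 : 0 < s by rewrite sqrtr_gt0; nra.
have s2 : s ^+ 2 = b ^+ 2 - 4 * a * c by rewrite sqr_sqrtr //; nra.
(* completing the square: [4a(c + bt + at^2) = (2at + b)^2 - s^2] *)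
have root t : (2 * a * t + b) ^+ 2 = s ^+ 2 -> c + b * t + a * t ^+ 2 = 0.
  move=> e; apply: (mulfI (_ : 4 * a != 0)); first by rewrite mulf_neq0 ?pnatr_eq0.
  by rewrite mulr0 -(subrr (s ^+ 2)) -{1}e s2; ring.
exists ((s - b) / (2 * a)), ((- s - b) / (2 * a)); split.
- by rewrite (inj_eq (mulIf _)) ?invr_neq0 //; apply/eqP; lra.
- by apply: root; rewrite mulrC divfK // subrK.
- by apply: root; rewrite mulrC divfK // subrK sqrrN.
Qed.

Lemma affine_eq0 (R : idomainType) (a b t1 t2 : R) :
  t1 != t2 -> a + b * t1 = 0 -> a + b * t2 = 0 -> a = 0.
Proof.
move=> t12 e1 e2.
have : b * (t1 - t2) = (a + b * t1) - (a + b * t2) by ring.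
rewrite e1 e2 subrr => /eqP; rewrite mulf_eq0 subr_eq0 (negPf t12) orbF => /eqP b0.
by move: e1; rewrite b0 mul0r addr0.
Qed.

Lemma morphD_morphB (U V : zmodType) (f : U -> V) :
  {morph f : u v / u + v} -> {morph f : u v / u - v}.
Proof. by move=> fD u v; apply/eqP; rewrite eq_sym subr_eq -fD subrK. Qed.

Section LinMap.
Variables (R : rcfType) (H : lmodType R[i]) (L : H -> H).
Hypothesis L_lin : lin_map L.

Lemma lin_mapD : {morph L : u v / u + v}.
Proof. by move=> u v; rewrite -[u]scale1r L_lin !scale1r. Qed.

Lemma lin_map0 : L 0 = 0.
Proof. by apply: (addrI (L 0)); rewrite -lin_mapD !addr0. Qed.

Lemma lin_mapZ a : {morph L : u / a *: u}.
Proof. by move=> u; rewrite -[a *: u]addr0 L_lin lin_map0 addr0. Qed.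

Lemma lin_mapB : {morph L : u v / u - v}.
Proof. exact: morphD_morphB lin_mapD. Qed.

End LinMap.

Section ExtensionFromCone.
Variables (R : rcfType) (H : lmodType R[i]) (P : set H) (W : H -> H) (p : H).
Hypothesis PZ : forall (c : R[i]) f, c != 0 -> P f -> P (c *: f).
Hypothesis Pp : P p.
Hypothesis P_absorbing :
  forall h, exists T : R, 0 < T /\ forall t, T <= t -> P (h + t%:C *: p).
Hypothesis WZ : forall (c : R[i]) f, P f -> c != 0 -> W (c *: f) = c *: W f.
Hypothesis WD : forall f g, P f -> P g -> P (f + g) -> W (f + g) = W f + W g.

Definition threshold h : R := sval (cid (P_absorbing h)).

Lemma threshold_gt0 h : 0 < threshold h.
Proof. exact: (svalP (cid (P_absorbing h))).1. Qed.

Lemma P_threshold h t : threshold h <= t -> P (h + t%:C *: p).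
Proof. exact: (svalP (cid (P_absorbing h))).2. Qed.

Lemma P_scale t : 0 < t -> P (t%:C *: p).
Proof. by move=> t_gt0; apply: PZ Pp; rewrite gt_eqF // ltcR. Qed.

Lemma scale_realD (x y : R) (v : H) : (x + y)%:C *: v = x%:C *: v + y%:C *: v.
Proof. by rewrite rmorphD scalerDl. Qed.

Definition ext h := W (h + (threshold h)%:C *: p) - W ((threshold h)%:C *: p).

Lemma extE h t : threshold h <= t -> ext h = W (h + t%:C *: p) - W (t%:C *: p).
Proof.
move=> le_st; rewrite /ext; set s := threshold h.
have s_gt0 : 0 < s := threshold_gt0 h.
have t_gt0 : 0 < t by apply: lt_le_trans le_st.
have P_s : P (h + s%:C *: p) := P_threshold (lexx _).
have P_st : P (h + s%:C *: p + t%:C *: p).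
  by rewrite -addrA -scale_realD; apply: P_threshold; rewrite lerDl ltW.
have P_ts : P (h + t%:C *: p + s%:C *: p) by rewrite addrAC.
have e : W (h + s%:C *: p) + W (t%:C *: p) = W (h + t%:C *: p) + W (s%:C *: p).
  rewrite -(WD P_s (P_scale t_gt0) P_st) -(WD (P_threshold le_st) (P_scale s_gt0) P_ts).
  by rewrite addrAC.
by apply/eqP; rewrite eq_sym subr_eq addrAC e addrK.
Qed.

Lemma ext_W f : P f -> ext f = W f.
Proof.
move=> Pf; have P_t := P_scale (threshold_gt0 f).
by rewrite /ext WD ?addrK //; exact: P_threshold.
Qed.

Lemma extD : {morph ext : u v / u + v}.
Proof.
move=> u v; have [[su sv] suv] := (threshold_gt0 u, threshold_gt0 v, threshold_gt0 (u + v)).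
set t := threshold u + threshold v + threshold (u + v).
have le_u : threshold u <= t by rewrite /t; lra.
have le_v : threshold v <= t by rewrite /t; lra.
have le_uv : threshold (u + v) <= t + t by rewrite /t; lra.
have P_t : P (t%:C *: p) by apply: P_scale; rewrite /t; lra.
have P_tt : P (t%:C *: p + t%:C *: p) by rewrite -scale_realD; apply: P_scale; rewrite /t; lra.
have P_uv : P ((u + t%:C *: p) + (v + t%:C *: p)).
  by rewrite addrACA -scale_realD; apply: P_threshold.
clearbody t; rewrite (extE le_u) (extE le_v) (extE le_uv) scale_realD addrACA.
by rewrite (WD (P_threshold le_u) (P_threshold le_v) P_uv) (WD P_t P_t P_tt) opprD addrACA.
Qed.

Lemma ext0 : ext 0 = 0.
Proof. by apply: (addrI (ext 0)); rewrite -extD !addr0. Qed.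

Lemma extB : {morph ext : u v / u - v}.
Proof. exact: morphD_morphB extD. Qed.

Lemma extZ a : {morph ext : u / a *: u}.
Proof.
move=> u; have [->|a_neq0] := eqVneq a 0; first by rewrite !scale0r ext0.
set t := threshold u.
have P_ut : P (u + t%:C *: p) := P_threshold (lexx _).
have P_t : P (t%:C *: p) := P_scale (threshold_gt0 u).
have -> : a *: u = a *: (u + t%:C *: p) - a *: (t%:C *: p) by rewrite -scalerBr addrK.
by rewrite extB !(ext_W (PZ a_neq0 _)) // (WZ P_ut a_neq0) (WZ P_t a_neq0) -scalerBr.
Qed.

Lemma ext_linear : lin_map ext.
Proof. by move=> a u v; rewrite extD extZ. Qed.

Lemma ext_unique L : lin_map L -> (forall f, P f -> L f = W f) -> forall f, L f = ext f.
Proof.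
move=> L_lin LW f.
have P_ft : P (f + (threshold f)%:C *: p) := P_threshold (lexx _).
have P_t : P ((threshold f)%:C *: p) := P_scale (threshold_gt0 f).
by rewrite /ext -(LW _ P_ft) -(LW _ P_t) -lin_mapB // addrK.
Qed.

Hypothesis W_inj : {in P &, injective W}.

Lemma ext_inj : injective ext.
Proof.
move=> u v; set t := threshold u + threshold v.
have le_u : threshold u <= t by rewrite lerDl ltW ?threshold_gt0.
have le_v : threshold v <= t by rewrite lerDr ltW ?threshold_gt0.
rewrite (extE le_u) (extE le_v) => /addIr eqW.
by apply: (addIr (t%:C *: p)); apply: (W_inj _ _ eqW); apply: mem_set; exact: P_threshold.
Qed.

Hypothesis W_onto : forall g, P g -> exists2 f, P f & W f = g.

Lemma ext_surj g : exists f, ext f = g.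
Proof.
have [x Px Wx] := W_onto (P_threshold (lexx (threshold g))).
have [y Py Wy] := W_onto (P_scale (threshold_gt0 g)).
by exists (x - y); rewrite extB !ext_W // Wx Wy addrK.
Qed.

Lemma ext_bij : bijective ext.
Proof.
have [g extK] := choice ext_surj.
by exists g => // f; apply: ext_inj; rewrite extK.
Qed.

Hypothesis W_P : forall f, P f -> P (W f).

Lemma P_ext f : P (ext f) <-> P f.
Proof.
split=> [|Pf]; last by rewrite ext_W //; apply: W_P.
by move=> /W_onto [g Pg]; rewrite -ext_W // => /ext_inj <-.
Qed.

End ExtensionFromCone.

Definition re_ip (R : rcfType) (H : lmodType R[i]) (ip : H -> H -> R[i]) f g : R :=
  complex.Re (ip f g).

Lemma Re_realM (R : rcfType) (t : R) (z : R[i]) :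
  complex.Re (t%:C * z) = t * complex.Re z.
Proof. by case: z => a b /=; rewrite mul0r subr0. Qed.

Lemma Im_realM (R : rcfType) (t : R) (z : R[i]) :
  complex.Im (t%:C * z) = t * complex.Im z.
Proof. by case: z => a b /=; rewrite mul0r addr0. Qed.

Section HermitianForm.
Variables (R : rcfType) (H : lmodType R[i]) (ip : H -> H -> R[i]).
Hypothesis ip_herm : herm_sesq_form ip.
Local Notation B := (re_ip ip).

Lemma ipDr f : {morph ip f : g h / g + h}.
Proof. by move=> g h; have := ip_herm.1 1 f g h; rewrite scale1r mul1r. Qed.

Lemma ipBr f : {morph ip f : g h / g - h}.
Proof. exact: morphD_morphB (ipDr f). Qed.

Lemma ip0r f : ip f 0 = 0.
Proof. by have := ipBr f 0 0; rewrite !subrr. Qed.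

Lemma ipZr f a g : ip f (a *: g) = a * ip f g.
Proof. by have := ip_herm.1 a f g 0; rewrite !addr0 ip0r addr0. Qed.

Lemma ipC f g : ip g f = (ip f g)^*.
Proof. exact: ip_herm.2. Qed.

Lemma ipDl f g h : ip (f + g) h = ip f h + ip g h.
Proof. by rewrite ipC ipDr rmorphD /= -!ipC. Qed.

Lemma ipZl a f g : ip (a *: f) g = a^* * ip f g.
Proof. by rewrite ipC ipZr rmorphM /= -ipC. Qed.

Lemma ip_ff_real f : ip f f = (B f f)%:C.
Proof.
rewrite /re_ip; have := ipC f f; case: (ip f f) => a b [b_eq].
by apply/eqP; rewrite eq_complex /= eqxx /=; apply/eqP; lra.
Qed.

Lemma FppE f : Fpp ip f = (0 < B f f).
Proof. by rewrite /Fpp /= ip_ff_real ltcR. Qed.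

Lemma ip_lt0E f : (ip f f < 0) = (B f f < 0).
Proof. by rewrite ip_ff_real ltcE /= eqxx. Qed.

Lemma re_ipC f g : B g f = B f g.
Proof. by rewrite /re_ip ipC; case: (ip f g). Qed.

Lemma re_ipDl f g h : B (f + g) h = B f h + B g h.
Proof. by rewrite /re_ip ipDl; case: (ip f h) (ip g h) => ? ? []. Qed.

Lemma re_ipDr f g h : B f (g + h) = B f g + B f h.
Proof. by rewrite re_ipC re_ipDl !(re_ipC f). Qed.

Lemma re_ipZr f (t : R) g : B f (t%:C *: g) = t * B f g.
Proof. by rewrite /re_ip ipZr; case: (ip f g) => a b /=; rewrite mul0r subr0. Qed.

Lemma re_ipZl (t : R) f g : B (t%:C *: f) g = t * B f g.
Proof. by rewrite re_ipC re_ipZr re_ipC. Qed.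

Lemma re_ip_expand f (t : R) g :
  B (f + t%:C *: g) (f + t%:C *: g) = B f f + 2 * B f g * t + B g g * t ^+ 2.
Proof. by rewrite !re_ipDl !re_ipDr !re_ipZl !re_ipZr (re_ipC g f); ring. Qed.

Lemma Im_ip f g : complex.Im (ip f g) = - B f ('i *: g).
Proof. by rewrite /re_ip ipZr; case: (ip f g) => a b /=; rewrite !mul0r !mul1r; ring. Qed.

Lemma FppZ c f : c != 0 -> Fpp ip f -> Fpp ip (c *: f).
Proof.
move=> c_neq0 Pf; rewrite /Fpp /= ipZl ipZr mulrA [c^* * c]mulrC -sqr_normc.
by rewrite mulr_gt0 // exprn_gt0 // normr_gt0.
Qed.

Lemma Fpp_absorbing p : Fpp ip p ->
  forall h, exists T : R, 0 < T /\ forall t, T <= t -> Fpp ip (h + t%:C *: p).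
Proof.
rewrite FppE => Pp h.
have [T [T_gt0 ev]] := quadratic_eventually_gt0 (2 * B h p) (B h h) Pp.
by exists T; split=> // t le_Tt; rewrite FppE re_ip_expand; apply: ev.
Qed.

Hypothesis ip_nondeg : nondeg_form ip.

Lemma exists_Fpp_re_ip_gt0 p f : Fpp ip p -> f != 0 ->
  exists2 q, Fpp ip q & 0 < B f q.
Proof.
move=> Pp f_neq0.
have [g fg] : exists g, ip f g <> 0.
  by apply/existsNP => /ip_nondeg /eqP; rewrite (negPf f_neq0).
have [T [T_gt0 ev]] := Fpp_absorbing Pp g.
have [q Pq fq] : exists2 q, Fpp ip q & ip f q != 0.
  have [fgT|] := eqVneq (ip f (g + T%:C *: p)) 0; last by exists (g + T%:C *: p); first exact: ev.
  exists (T%:C *: p); first by apply: FppZ; rewrite // gt_eqF // ltcR.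
  by apply/eqP => fT0; apply: fg; rewrite -(addrK (T%:C *: p) g) ipBr fgT fT0 subrr.
(* scaling by the conjugate of [f,q] makes [f,q] positive *)
exists ((ip f q)^* *: q); first by apply: FppZ; rewrite ?conjc_eq0.
have : 0 < ip f ((ip f q)^* *: q) by rewrite ipZr mulrC -sqr_normc exprn_gt0 // normr_gt0.
by rewrite ltcE => /andP[].
Qed.

End HermitianForm.

Section FppInvariantMap.
Variables (R : rcfType) (H : lmodType R[i]) (ip : H -> H -> R[i]) (L : H -> H).
Hypotheses (ip_herm : herm_sesq_form ip) (ip_nondeg : nondeg_form ip).
Hypotheses (L_lin : lin_map L) (L_Fpp : forall f, Fpp ip (L f) <-> Fpp ip f).
Variables (p n : H).
Hypotheses (Pp : Fpp ip p) (Nn : re_ip ip n n < 0).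
Local Notation B := (re_ip ip).

Lemma L_expand f (t : R) g :
  B (L (f + t%:C *: g)) (L (f + t%:C *: g)) =
  B (L f) (L f) + 2 * B (L f) (L g) * t + B (L g) (L g) * t ^+ 2.
Proof. by rewrite lin_mapD // lin_mapZ // re_ip_expand. Qed.

Lemma L_neutral f : B f f = 0 -> B (L f) (L f) = 0.
Proof.
move=> ff0; apply/eqP; rewrite eq_le; apply/andP; split.
  by rewrite leNgt; apply/negP; rewrite -FppE // => /L_Fpp; rewrite FppE // ff0 ltxx.
have [->|f_neq0] := eqVneq f 0; first by rewrite lin_map0 // /re_ip ip0r.
have [q Pq fq_gt0] := exists_Fpp_re_ip_gt0 ip_herm ip_nondeg Pp f_neq0.
apply: (@ge0_of_quadratic_gt0 _ _ (2 * B (L f) (L q)) (B (L q) (L q))) => u u_gt0.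
have : Fpp ip (f + u%:C *: q).
  by rewrite FppE // re_ip_expand // ff0 add0r addr_gt0 ?mulr_gt0 // -FppE.
by move=> /L_Fpp; rewrite FppE // L_expand.
Qed.

Definition ratio := B (L p) (L p) / B p p.

Definition defect f := B (L f) (L f) - ratio * B f f.

Definition defect_form f g := B (L f) (L g) - ratio * B f g.

Lemma defect_expand f (t : R) g :
  defect (f + t%:C *: g) = defect f + 2 * defect_form f g * t + defect g * t ^+ 2.
Proof. by rewrite /defect /defect_form L_expand re_ip_expand //; ring. Qed.

Lemma defect_p : defect p = 0.
Proof. by rewrite /defect /ratio divfK ?subrr // gt_eqF // -FppE. Qed.

Lemma defect_neutral f : B f f = 0 -> defect f = 0.
Proof. by move=> ff0; rewrite /defect L_neutral // ff0 mulr0 subrr. Qed.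

Lemma defect_transfer f g : B f f * B g g < 0 -> defect g = 0 -> defect f = 0.
Proof.
move=> fg_lt0 dg0; rewrite mulrC in fg_lt0.
have [t1 [t2 [t12 r1 r2]]] := quadratic_two_roots (2 * B f g) fg_lt0.
have root t : B f f + 2 * B f g * t + B g g * t ^+ 2 = 0 ->
    defect f + 2 * defect_form f g * t = 0.
  rewrite -re_ip_expand // => /defect_neutral.
  by rewrite defect_expand dg0 mul0r addr0.
exact: affine_eq0 t12 (root _ r1) (root _ r2).
Qed.

Lemma defect_eq0 f : defect f = 0.
Proof.
have Bp : 0 < B p p by rewrite -FppE.
have dn : defect n = 0 by apply: defect_transfer defect_p; rewrite pmulr_llt0.
case: (ltgtP (B f f) 0) => [neg|pos|/defect_neutral //].
- by apply: defect_transfer defect_p; rewrite pmulr_llt0.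
- by apply: defect_transfer dn; rewrite pmulr_rlt0.
Qed.

Lemma re_ip_L f g : B (L f) (L g) = ratio * B f g.
Proof.
have := defect_expand f 1 g; rewrite !defect_eq0 /defect_form; lra.
Qed.

Lemma ip_L f g : ip (L f) (L g) = ratio%:C * ip f g.
Proof.
apply/eqP; rewrite eq_complex Re_realM Im_realM !Im_ip // -lin_mapZ //.
by rewrite -/(B (L f) (L g)) -/(B f g) !re_ip_L mulrN !eqxx.
Qed.

Lemma ratio_gt0 : 0 < ratio.
Proof. by rewrite divr_gt0 // -FppE // L_Fpp. Qed.

End FppInvariantMap.

Lemma Fpp_invariant_similitude (R : rcfType) (H : lmodType R[i])
    (ip : H -> H -> R[i]) (L : H -> H) :
  herm_sesq_form ip -> indef_form ip -> nondeg_form ip -> lin_map L ->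
  (forall f, Fpp ip (L f) <-> Fpp ip f) ->
  exists2 c : R, 0 < c & forall f g, ip (L f) (L g) = c%:C * ip f g.
Proof.
move=> herm [[p Pp] [n Nn]] nondeg L_lin L_Fpp; rewrite (ip_lt0E herm) in Nn.
by exists (ratio ip L p); [exact: ratio_gt0 | exact: ip_L Nn].
Qed.

Lemma theta_W_similitude (R : realType) (H : lmodType R[i]) (ip : H -> H -> R[i])
    (W : H -> H) (c : R) :
  (exists p, Fpp ip p) -> (forall f, Fpp ip f -> ip (W f) (W f) = c%:C * ip f f) ->
  theta_W ip W = c.
Proof.
move=> [p Pp] Wc; rewrite /theta_W -[RHS]inf1; congr inf.
apply/seteqP; split=> [_ [f Pf <-]|_ ->] /=; last exists p => //.
all: by rewrite Wc // mulfK // gt_eqF.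
Qed.

Theorem theorem2p3 (R : realType) (H : lmodType R[i]) (ip : H -> H -> R[i])
  (W : H -> H) :
  herm_sesq_form ip -> indef_form ip -> nondeg_form ip ->
  linear_on_Fpp ip W ->
  (forall f, Fpp ip f -> Fpp ip (W f)) ->
  {in Fpp ip &, injective W} ->
  (forall g, Fpp ip g -> exists2 f, Fpp ip f & W f = g) ->
  exists L : H -> H,
    [/\ lin_map L,
        (forall f, Fpp ip f -> L f = W f),
        (forall L' : H -> H, lin_map L' -> (forall f, Fpp ip f -> L' f = W f) ->
           forall f, L' f = L f),
        bijective L
      & 0 < theta_W ip W /\ forall f g : H, ip (L f) (L g) = (theta_W ip W)%:C * ip f g].
Proof.
move=> herm indef nondeg [WZ WD] W_Fpp W_inj W_onto.
have [[p Pp] _] := indef.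
have PZ := FppZ herm.
have absorb := Fpp_absorbing herm Pp.
have L_Fpp := P_ext PZ Pp absorb WD W_inj W_onto W_Fpp.
have L_lin := ext_linear PZ Pp absorb WZ WD.
have [c c_gt0 ip_L] := Fpp_invariant_similitude herm indef nondeg L_lin L_Fpp.
have -> : theta_W ip W = c.
  apply: theta_W_similitude => [|f Pf]; first by exists p.
  by rewrite -(ext_W PZ Pp absorb WD Pf) ip_L.
exists (ext W absorb); split=> //.
- exact: ext_W.
- exact: ext_unique.
- exact: ext_bij.
Qed.
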